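(* Let $D$ be a squarefree integer and let $p>3$ be a prime dividing $D$. Then $C_D(\mathbb{Q}_p)\neq\emptyset$ if and only if $p\equiv1\pmod{24}$.
   Context: $C_D\subset\mathbb{P}^4$ is the curve over $\mathbb{Q}$ given by $X_0^2-2X_1^2+X_2^2=0$, $X_1^2-2X_2^2+DX_3^2=0$, $X_2^2-2DX_3^2+X_4^2=0$. *)

From mathcomp Require Import all_boot all_order all_algebra.
Set Implicit Arguments. Unset Strict Implicit. Unset Printing Implicit Defensive.
Import Order.TTheory GRing.Theory Num.Theory.
Local Open Scope ring_scope.

(* p-adic integers Z_p modelled as the inverse limit of Z/p^k Z:
   a sequence of integers a k (representing a residue mod p^k)
   with a (k+1) = a k mod p^k. *)
Definition padic_int (p : nat) (a : nat -> int) : Prop :=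
  forall k : nat, (a k.+1 = a k %[mod (p ^ k)%:Z])%Z.

Definition CD_eq1 (D x0 x1 x2 x3 x4 : int) : int := x0^+2 - 2 * x1^+2 + x2^+2.
Definition CD_eq2 (D x0 x1 x2 x3 x4 : int) : int := x1^+2 - 2 * x2^+2 + D * x3^+2.
Definition CD_eq3 (D x0 x1 x2 x3 x4 : int) : int := x2^+2 - 2 * D * x3^+2 + x4^+2.

(* Every point of
   P^4(Q_p) has a primitive representative in Z_p^5 (some coordinate a unit),
   and the equations hold in Z_p iff they hold mod p^k for every k. *)
Definition CD_has_Qp_point (D : int) (p : nat) : Prop :=
  exists x0 x1 x2 x3 x4 : nat -> int,
    [/\ padic_int p x0, padic_int p x1, padic_int p x2, padic_int p x3
      & padic_int p x4] /\
    ~ [/\ (p%:Z %| x0 1%N)%Z, (p%:Z %| x1 1%N)%Z, (p%:Z %| x2 1%N)%Z,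
          (p%:Z %| x3 1%N)%Z & (p%:Z %| x4 1%N)%Z] /\
    forall k : nat,
      [/\ ((p ^ k)%:Z %| CD_eq1 D (x0 k) (x1 k) (x2 k) (x3 k) (x4 k))%Z,
          ((p ^ k)%:Z %| CD_eq2 D (x0 k) (x1 k) (x2 k) (x3 k) (x4 k))%Z &
          ((p ^ k)%:Z %| CD_eq3 D (x0 k) (x1 k) (x2 k) (x3 k) (x4 k))%Z].

Definition squarefree_int (D : int) : Prop :=
  forall q : nat, prime q -> ~~ (q ^ 2 %| `|D|)%N.

(* Modulo p the curve becomes X0^2 - 2 X1^2 + X2^2 = X1^2 - 2 X2^2 = X2^2 + X4^2 = 0.
   On a primitive p-adic point X2 is a unit: otherwise X0, X1, X2, X4 are divisible
   by p, so p^2 | D X3^2 and, D being squarefree, p | X3.  Dividing by X2 shows that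
   -1, 2 and 3 are squares mod p.  In F_p this amounts to the existence of a
   primitive 8th root (1 + i) / sqrt 2 and of a primitive cube root
   (sqrt -3 - 1) / 2, i.e. to 24 | p - 1.  Conversely a primitive 24th root of
   unity z gives the square roots z^6, z^3 - z^9, z^6 (2 z^8 + 1) of -1, 2, 3,
   which Hensel's lemma lifts to the point (sqrt 3 : sqrt 2 : 1 : 0 : sqrt -1). *)

From mathcomp Require Import all_boot all_order all_algebra cyclic finfield.
From mathcomp Require Import ring zify.
Set Implicit Arguments. Unset Strict Implicit. Unset Printing Implicit Defensive.
Import GRing.Theory.
Local Open Scope ring_scope.

Section FiniteField.
Variable F : finFieldType.

Lemma expf_card_pred (x : F) : x != 0 -> x ^+ #|F|.-1 = 1.
Proof.
move=> x0; apply: (mulfI x0); rewrite mulr1 -exprS.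
by rewrite (ltn_predK (finNzRing_gt1 F)) expf_card.
Qed.

Lemma prim_root_dvd_card_pred n (z : F) : n.-primitive_root z -> (n %| #|F|.-1)%N.
Proof.
move=> pz; rewrite (prim_order_dvd pz) expf_card_pred //.
by rewrite (prim_root_eq0 pz) -lt0n (prim_order_gt0 pz).
Qed.

Lemma finField_prim_root_exists n : (n %| #|F|.-1)%N -> exists z : F, n.-primitive_root z.
Proof.
move=> n_dvd; have card_gt0 : (0 < #|F|.-1)%N.
  by rewrite -ltnS (ltn_predK (finNzRing_gt1 F)) finNzRing_gt1.
have : has (#|F|.-1).-primitive_root (enum (predC1 (0 : F))).
  apply: has_prim_root => //; rewrite ?enum_uniq // -?cardE ?cardC1 //.
  by apply/allP => x; rewrite mem_enum => x0; apply/unity_rootP/expf_card_pred.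
by case/hasP => g _ pg; exists (g ^+ (#|F|.-1 %/ n)); apply: dvdn_prim_root.
Qed.

End FiniteField.

Lemma prim_root_pfactor (R : idomainType) q k (z : R) : prime q ->
  z ^+ (q ^ k.+1) = 1 -> z ^+ (q ^ k) != 1 -> (q ^ k.+1).-primitive_root z.
Proof.
move=> q_pr zq1 zqk; have qk_gt0 : (0 < q ^ k.+1)%N by rewrite expn_gt0 prime_gt0.
have [m pz] := prim_order_exists qk_gt0 zq1.
case/(dvdn_pfactor _ _ q_pr) => j; rewrite leq_eqVlt ltnS => /orP[/eqP <- <- //|ltjk dm].
by case/negP: zqk; rewrite -(prim_order_dvd pz) dm dvdn_exp2l.
Qed.

Lemma prim_root_half (R : idomainType) n (z : R) : (2 * n).-primitive_root z ->
  z ^+ n = -1.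
Proof.
move=> pz; have n_gt0 : (0 < n)%N by have := prim_order_gt0 pz; lia.
have : (z ^+ n - 1) * (z ^+ n + 1) = 0.
  by rewrite -subr_sqr expr1n -exprM mulnC (prim_expr_order pz) subrr.
move/eqP; rewrite mulf_eq0 subr_eq0 -(prim_order_dvd pz) addr_eq0 => /orP[/dvdn_leq|/eqP //].
by move=> /(_ n_gt0); lia.
Qed.

Lemma prim_root8_sqrt2 (R : idomainType) (z : R) : 8.-primitive_root z ->
  (z - z ^+ 3) ^+ 2 = 2.
Proof.
move=> pz; have z4 : z ^+ 4 = -1 by apply: (@prim_root_half _ 4).
have -> : (z - z ^+ 3) ^+ 2 = z ^+ 2 * (1 + z ^+ 4) - 2 * z ^+ 4 by ring.
by rewrite z4; ring.
Qed.

Lemma prim_root3_sqrtN3 (R : idomainType) (w : R) : 3.-primitive_root w ->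
  (2 * w + 1) ^+ 2 = -3.
Proof.
move=> pw; have w_neq1 : w != 1 by rewrite -[w]expr1 -(prim_order_dvd pw).
have : (w - 1) * (w ^+ 2 + w + 1) = 0.
  have -> : (w - 1) * (w ^+ 2 + w + 1) = w ^+ 3 - 1 by ring.
  by rewrite (prim_expr_order pw) subrr.
move/eqP; rewrite mulf_eq0 subr_eq0 (negbTE w_neq1) /= => /eqP w2.
have -> : (2 * w + 1) ^+ 2 = 4 * (w ^+ 2 + w + 1) - 3 by ring.
by rewrite w2; ring.
Qed.

Definition squares_N1_2_3 (R : pzRingType) : Prop :=
  exists a b c : R, [/\ a ^+ 2 = -1, b ^+ 2 = 2 & c ^+ 2 = 3].

Section FieldRoots.
Variable F : fieldType.
Hypothesis two_neq0 : 2 != 0 :> F.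

Lemma sqrtN1_sqrt2_prim_root8 (a b : F) : a ^+ 2 = -1 -> b ^+ 2 = 2 ->
  8.-primitive_root ((1 + a) / b).
Proof.
move=> a2 b2; have z2 : ((1 + a) / b) ^+ 2 = a.
  by rewrite expr_div_n b2 sqrrD a2; field.
change ((2 ^ 3)%N.-primitive_root ((1 + a) / b)).
apply: prim_root_pfactor => //; rewrite (exprM _ 2) z2.
  by rewrite (exprM a 2 2) a2; ring.
by rewrite a2 -subr_eq0 -opprD oppr_eq0.
Qed.

Lemma sqrtN3_prim_root3 (x : F) : 3 != 0 :> F -> x ^+ 2 = -3 ->
  3.-primitive_root ((x - 1) / 2).
Proof.
move=> three_neq0 x2; set w := (x - 1) / 2.
have w2 : w ^+ 2 + w + 1 = 0.
  have four_neq0 : 4 != 0 :> F.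
    by rewrite (_ : 4 = 2 * 2 :> F) ?mulf_neq0 //; ring.
  by rewrite /w expr_div_n sqrrB x2; field; rewrite two_neq0.
have w_neq1 : w != 1.
  by apply: contraNneq three_neq0 => w1; apply/eqP; rewrite -[RHS]w2 w1; ring.
change ((3 ^ 1)%N.-primitive_root w); apply: prim_root_pfactor => //; rewrite expn1.
have -> : w ^+ 3 = (w - 1) * (w ^+ 2 + w + 1) + 1 by ring.
by rewrite w2 mulr0 add0r.
Qed.

End FieldRoots.

Lemma finField_squares_N1_2_3 (F : finFieldType) : 2 != 0 :> F -> 3 != 0 :> F ->
  squares_N1_2_3 F <-> (24 %| #|F|.-1)%N.
Proof.
move=> two_neq0 three_neq0; split.
  case=> a [b [c [a2 b2 c2]]].
  have ac2 : (a * c) ^+ 2 = -3 by rewrite exprMn a2 c2 mulN1r.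
  have /prim_root_dvd_card_pred dvd8 := sqrtN1_sqrt2_prim_root8 two_neq0 a2 b2.
  have /prim_root_dvd_card_pred dvd3 := sqrtN3_prim_root3 two_neq0 three_neq0 ac2.
  by rewrite (_ : 24 = 8 * 3)%N // Gauss_dvd // dvd8 dvd3.
case/finField_prim_root_exists => z pz.
have pz6 : (2 * 2).-primitive_root (z ^+ 6) by apply: (dvdn_prim_root pz).
have pz3 : 8.-primitive_root (z ^+ 3) by apply: (dvdn_prim_root pz).
have pz8 : 3.-primitive_root (z ^+ 8) by apply: (dvdn_prim_root pz).
have i2 := prim_root_half pz6.
exists (z ^+ 6), (z ^+ 3 - z ^+ 9), (z ^+ 6 * (2 * z ^+ 8 + 1)); split => //.
  by rewrite -(prim_root8_sqrt2 pz3) -exprM.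
by rewrite exprMn i2 (prim_root3_sqrtN3 pz8) mulrNN mul1r.
Qed.

Lemma Fp_nat_neq0 p n : prime p -> (0 < n < p)%N -> n%:R != 0 :> 'F_p.
Proof.
move=> p_pr /andP[n_gt0 n_lt_p]; rewrite -(dvdn_pcharf (pchar_Fp p_pr)).
by apply/negP => /(dvdn_leq n_gt0); lia.
Qed.

Lemma Fp_squares_N1_2_3 p : prime p -> (3 < p)%N ->
  squares_N1_2_3 'F_p <-> p = 1 %[mod 24].
Proof.
by move=> p_pr p_gt3; rewrite finField_squares_N1_2_3 ?Fp_nat_neq0 ?card_Fp //; lia.
Qed.

Lemma PoszX (m n : nat) : (m ^ n)%:Z = m%:Z ^+ n.
Proof. by elim: n => // n IHn; rewrite expnS PoszM IHn exprS. Qed.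

Definition padic_sqrt (p : nat) (a : int) (s : nat -> int) : Prop :=
  padic_int p s /\ forall k, ((p ^ k)%:Z %| s k ^+ 2 - a)%Z.

Section Newton.
Variables (p : nat) (a t r : int).
Hypothesis t_inv : (p%:Z %| 2 * r * t - 1)%Z.

Definition newton_sqrt_step (x : int) : int := x - (x ^+ 2 - a) * t.

Lemma newton_sqrt_stepE x k : (p%:Z %| x - r)%Z ->
  ((p ^ k.+1)%:Z %| x ^+ 2 - a)%Z ->
  ((p ^ k.+2)%:Z %| newton_sqrt_step x ^+ 2 - a)%Z.
Proof.
move=> xr xa; set e := x ^+ 2 - a in xa *.
have -> : newton_sqrt_step x ^+ 2 - a = e * (1 - 2 * x * t) + t ^+ 2 * (e * e).
  by rewrite /newton_sqrt_step /e; ring.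
apply: rpredD.
  rewrite expnS mulnC PoszM dvdz_mul //.
  have -> : 1 - 2 * x * t = - (2 * r * t - 1) - 2 * t * (x - r) by ring.
  by rewrite rpredB ?rpredN // dvdz_mull.
apply/dvdz_mull/(dvdz_trans _ (dvdz_mul xa xa)).
by rewrite -PoszM -expnD !PoszX dvdz_exp2l //; lia.
Qed.

Definition newton_sqrt (k : nat) : int := iter k newton_sqrt_step r.

Lemma newton_sqrt_padic : (p%:Z %| r ^+ 2 - a)%Z -> padic_sqrt p a newton_sqrt.
Proof.
move=> ra.
have inv k : ((p ^ k.+1)%:Z %| newton_sqrt k ^+ 2 - a)%Z &&
             (p%:Z %| newton_sqrt k - r)%Z.
  elim: k => [|k /andP[IHa IHr]]; first by rewrite expn1 ra subrr dvdz0.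
  rewrite newton_sqrt_stepE //=.
  rewrite /newton_sqrt_step -/(newton_sqrt k) addrAC rpredB // dvdz_mulr //.
  by apply: dvdz_trans IHa; rewrite PoszX dvdz_exp.
have dvd_pk k : ((p ^ k)%:Z %| newton_sqrt k ^+ 2 - a)%Z.
  by case/andP: (inv k) => /(dvdz_trans _) -> //; rewrite !PoszX dvdz_exp2l.
split=> // k; apply/eqP; rewrite eqz_mod_dvd /= /newton_sqrt_step -/(newton_sqrt k).
by rewrite addrAC subrr add0r rpredN dvdz_mulr.
Qed.

End Newton.

Lemma hensel_sqrt p a r : prime p -> (p%:Z %| r ^+ 2 - a)%Z ->
  ~~ (p%:Z %| 2 * r)%Z -> exists s, padic_sqrt p a s.
Proof.
move=> p_pr ra p_ndvd; have p_cop : coprimez p (2 * r).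
  by rewrite coprimezE prime_coprime // -dvdzE.
have [u [t Bezout]] := Bezoutz p (2 * r); rewrite (eqP p_cop) in Bezout.
exists (newton_sqrt a t r); apply: newton_sqrt_padic => //.
have -> : 2 * r * t - 1 = 2 * r * t - (u * p + t * (2 * r)) by rewrite Bezout.
have -> : 2 * r * t - (u * p + t * (2 * r)) = - (u * p) by ring.
by rewrite rpredN dvdz_mull.
Qed.

Lemma Fp_sqrt_lift p a (u : 'F_p) : prime p -> 2 != 0 :> 'F_p ->
  a%:~R != 0 :> 'F_p -> u ^+ 2 = a%:~R -> exists s, padic_sqrt p a s.
Proof.
move=> p_pr two_neq0 a_neq0 u2; pose r : int := (u : nat).
have r_u : r%:~R = u by rewrite -pmulrn natr_Zp.
apply: (@hensel_sqrt p a r) => //; rewrite (dvdz_pcharf (pchar_Fp p_pr)).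
  by rewrite rmorphB rmorphXn /= r_u u2 subrr.
rewrite rmorphM /= r_u rmorph_nat mulf_eq0 negb_or two_neq0.
by apply: contraNneq a_neq0 => u0; rewrite -u2 u0 expr0n.
Qed.

Lemma padic_int_dvdp p x k : padic_int p x -> (p%:Z %| x k.+1)%Z = (p%:Z %| x 1%N)%Z.
Proof.
move=> x_padic; elim: k => // k <-; rewrite -(subrK (x k.+1) (x k.+2)) rpredDl //.
have /eqP := x_padic k.+1; rewrite eqz_mod_dvd => /(dvdz_trans _); apply.
by rewrite PoszX dvdz_exp.
Qed.

Lemma squarefree_dvd_sqr D p y : squarefree_int D -> prime p -> (p %| `|D|)%N ->
  ((p ^ 2)%:Z %| D * y ^+ 2)%Z -> (p%:Z %| y)%Z.
Proof.
move=> D_sqf p_pr /dvdnP[d D_pd]; rewrite !dvdzE abszM abszX D_pd -mulnA.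
have p_ndvd_d : ~~ (p %| d)%N.
  apply: contra (D_sqf p p_pr); rewrite D_pd => /dvdnP[e ->].
  by rewrite -mulnA (expnS p 1) expn1 dvdn_mull.
rewrite /= mulnCA (expnS p 1) expn1 dvdn_pmul2l ?prime_gt0 //.
by rewrite Euclid_dvdM // (negbTE p_ndvd_d) Euclid_dvdX // andbT.
Qed.

Section ReducedCurve.
Variables (F : fieldType) (y0 y1 y2 y4 : F).
Hypotheses (eq1 : y0 ^+ 2 - 2 * y1 ^+ 2 + y2 ^+ 2 = 0)
  (eq2 : y1 ^+ 2 - 2 * y2 ^+ 2 = 0) (eq3 : y2 ^+ 2 + y4 ^+ 2 = 0).

Lemma reduced_curve_y2_eq0 : y2 = 0 -> [/\ y0 = 0, y1 = 0 & y4 = 0].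
Proof.
move=> y2_0; have sqr_eq0 (y : F) : y ^+ 2 = 0 -> y = 0.
  by move/eqP; rewrite sqrf_eq0 => /eqP.
have y1_0 : y1 = 0 by apply: sqr_eq0; rewrite -[RHS]eq2 y2_0; ring.
split=> //; apply: sqr_eq0.
  by rewrite -[RHS]eq1 y1_0 y2_0; ring.
by rewrite -[RHS]eq3 y2_0; ring.
Qed.

Lemma reduced_curve_squares : y2 != 0 -> squares_N1_2_3 F.
Proof.
move=> y2_neq0; exists (y4 / y2), (y1 / y2), (y0 / y2).
have y1_2 : y1 ^+ 2 = 2 * y2 ^+ 2 by rewrite -[LHS]subr0 -eq2; ring.
have y4_2 : y4 ^+ 2 = - y2 ^+ 2 by rewrite -[LHS]subr0 -eq3; ring.
have y0_2 : y0 ^+ 2 = 3 * y2 ^+ 2 by rewrite -[LHS]subr0 -eq1 y1_2; ring.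
by split; rewrite expr_div_n ?y4_2 ?y1_2 ?y0_2; field.
Qed.

End ReducedCurve.

Lemma CD_point_squares D p : squarefree_int D -> prime p -> (p %| `|D|)%N ->
  CD_has_Qp_point D p -> squares_N1_2_3 'F_p.
Proof.
move=> D_sqf p_pr p_dvd_D [x0 [x1 [x2 [x3 [x4 [[h0 h1 h2 h3 h4] [x_prim x_eqs]]]]]]].
rewrite -(padic_int_dvdp 1 h0) -(padic_int_dvdp 1 h1) -(padic_int_dvdp 1 h2)
  -(padic_int_dvdp 1 h3) -(padic_int_dvdp 1 h4) in x_prim.
(* Mod p the point lies on the reduced curve; mod p^2 it still sees p^2 | D x3^2. *)
have [e1 e2 e3] := x_eqs 2%N; move: e1 e2 e3 x_prim.
set y0 := x0 2%N; set y1 := x1 2%N; set y2 := x2 2%N; set y3 := x3 2%N; set y4 := x4 2%N.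
move=> e1 e2 e3 y_prim; have pchar_p := pchar_Fp p_pr.
have reduce (n : int) : ((p ^ 2)%:Z %| n)%Z -> n%:~R = 0 :> 'F_p.
  by move=> /(dvdz_trans _) pn; apply/eqP; rewrite -(dvdz_pcharf pchar_p) pn // PoszX dvdz_exp.
have D0 : D%:~R = 0 :> 'F_p by apply/eqP; rewrite -(dvdz_pcharf pchar_p) dvdzE.
have f1 : y0%:~R ^+ 2 - 2 * y1%:~R ^+ 2 + y2%:~R ^+ 2 = 0 :> 'F_p.
  by rewrite -(reduce _ e1) rmorphD rmorphB !rmorphXn rmorphM rmorph_nat /=; ring.
have f2 : y1%:~R ^+ 2 - 2 * y2%:~R ^+ 2 = 0 :> 'F_p.
  by rewrite -(reduce _ e2) rmorphD rmorphB !rmorphXn !rmorphM rmorph_nat /= D0; ring.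
have f3 : y2%:~R ^+ 2 + y4%:~R ^+ 2 = 0 :> 'F_p.
  by rewrite -(reduce _ e3) rmorphD rmorphB !rmorphXn !rmorphM rmorph_nat /= D0; ring.
have [y2_0|] := eqVneq (y2%:~R : 'F_p) 0; last exact: reduced_curve_squares f1 f2 f3.
have [y0_0 y1_0 y4_0] := reduced_curve_y2_eq0 f1 f2 f3 y2_0.
have p_dvd (y : int) : y%:~R = 0 :> 'F_p -> (p%:Z %| y)%Z.
  by move=> y_0; rewrite (dvdz_pcharf pchar_p) y_0.
have p2_dvd (y : int) : y%:~R = 0 :> 'F_p -> ((p ^ 2)%:Z %| y ^+ 2)%Z.
  by move=> /p_dvd; rewrite PoszX; apply: dvdz_exp2r.
case: y_prim; split; try exact: p_dvd.
apply: (squarefree_dvd_sqr D_sqf p_pr p_dvd_D).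
have -> : D * y3 ^+ 2 = CD_eq2 D y0 y1 y2 y3 y4 - y1 ^+ 2 + 2 * y2 ^+ 2 by rewrite /CD_eq2; ring.
exact: rpredD (rpredB e2 (p2_dvd _ y1_0)) (dvdz_mull _ (p2_dvd _ y2_0)).
Qed.

Lemma squares_CD_point D p : prime p -> (3 < p)%N -> squares_N1_2_3 'F_p ->
  CD_has_Qp_point D p.
Proof.
move=> p_pr p_gt3 [a [b [c [a2 b2 c2]]]].
have nat_neq0 n : (0 < n < p)%N -> n%:~R != 0 :> 'F_p by apply: Fp_nat_neq0.
have two_neq0 : 2 != 0 :> 'F_p by apply: Fp_nat_neq0 => //; lia.
have [s4 [s4_padic s4_sq]] : exists s : nat -> int, padic_sqrt p (-1) s.
  by apply: (Fp_sqrt_lift (u := a)); rewrite ?rmorphN ?rmorph1 ?oppr_eq0 ?oner_eq0.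
have [s1 [s1_padic s1_sq]] : exists s : nat -> int, padic_sqrt p 2 s.
  by apply: (Fp_sqrt_lift (u := b)) => //; rewrite nat_neq0 //; lia.
have [s0 [s0_padic s0_sq]] : exists s : nat -> int, padic_sqrt p 3 s.
  by apply: (Fp_sqrt_lift (u := c)) => //; rewrite nat_neq0 //; lia.
exists s0, s1, (fun=> 1), (fun=> 0), s4; split; first by split.
split=> [[_ _ /=]|k]; first by rewrite dvdzE /= dvdn1 => /eqP p1; rewrite p1 in p_gt3.
rewrite /CD_eq1 /CD_eq2 /CD_eq3; split.
- have -> : s0 k ^+ 2 - 2 * s1 k ^+ 2 + 1 ^+ 2 = (s0 k ^+ 2 - 3) - 2 * (s1 k ^+ 2 - 2) by ring.
  by rewrite rpredB ?dvdz_mull.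
- by rewrite (_ : _ + _ = s1 k ^+ 2 - 2) //; ring.
- by rewrite (_ : _ + _ = s4 k ^+ 2 - (-1)) //; ring.
Qed.

Local Close Scope ring_scope.

Theorem lemma4p5 (D : int) (p : nat) :
  squarefree_int D -> prime p -> (3 < p)%N -> (p %| `|D|)%N ->
  (CD_has_Qp_point D p <-> p = 1 %[mod 24]).
Proof.
move=> D_sqf p_pr p_gt3 p_dvd_D; rewrite -Fp_squares_N1_2_3 //.
by split; [exact: CD_point_squares | exact: squares_CD_point].
Qed.
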